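(* Let $K\ge L\ge T\ge 2$, let $x$ be a positive integer coprime to $q$, and let $\mathrm{CAT}_x(K,L,T)$ be as in the context. Then $|\mathcal{TR}\cap\mathcal{BR}|=2\bar T-\kappa$ and $|\mathcal{BL}\cap\mathcal{BR}|=2\bar T-\lambda$.
   Context: Let $\kappa,\lambda$ be the smallest non-negative integers such that $K+1+\kappa$ and $L+1+\lambda$ are coprime to $T-1$; $K^\star=K+1+\kappa$, $L^\star=L+1+\lambda$, $\bar T=T-1$, $q=K^\star L^\star+\bar T^2$. For $x$ coprime to $q$, $y\in\{0,\dots,q-1\}$ is the unique integer with $x\bar T+yK^\star\equiv0\pmod q$. $\mathrm{CAT}_x(K,L,T)$ consists of $q$ and the vectors over $\mathbb{Z}_q$: $\boldsymbol{\alpha}^{(p)}=(ky)_{k=0}^{K-1}$, $\boldsymbol{\alpha}^{(s)}=(Ky+kx)_{k=0}^{T-1}$, $\boldsymbol{\beta}^{(p)}=(kx)_{k=0}^{L-1}$, $\boldsymbol{\beta}^{(s)}=(ky-x)_{k=0}^{T-1}$, all mod $q$. With $\{\mathbf v\}$ the set of entries and sumsets $\mathcal A+\mathcal B=\{a+b\}$ in $\mathbb{Z}_q$: $\mathcal{TR}=\{\boldsymbol{\alpha}^{(p)}\}+\{\boldsymbol{\beta}^{(s)}\}$, $\mathcal{BL}=\{\boldsymbol{\alpha}^{(s)}\}+\{\boldsymbol{\beta}^{(p)}\}$, $\mathcal{BR}=\{\boldsymbol{\alpha}^{(s)}\}+\{\boldsymbol{\beta}^{(s)}\}$. *)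

From mathcomp Require Import all_boot.
Set Implicit Arguments. Unset Strict Implicit. Unset Printing Implicit Defensive.

(* All elements of Z_q are represented by their canonical representatives
   0..q-1 (natural numbers reduced mod q). *)

Definition is_least_coprime_shift (a m k : nat) : bool :=
  coprime (a + k) m && all (fun j => ~~ coprime (a + j) m) (iota 0 k).

Definition Kstar (K kappa : nat) := K + 1 + kappa.
Definition Lstar (L lambda : nat) := L + 1 + lambda.
Definition Tbar (T : nat) := T - 1.
Definition qCAT (K L T kappa lambda : nat) :=
  Kstar K kappa * Lstar L lambda + Tbar T ^ 2.

Definition alpha_p (q K y : nat) : seq nat := [seq (k * y) %% q | k <- iota 0 K].
Definition alpha_s (q K T x y : nat) : seq nat :=
  [seq (K * y + k * x) %% q | k <- iota 0 T].
Definition beta_p (q L x : nat) : seq nat := [seq (k * x) %% q | k <- iota 0 L].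
(* (k*y - x) mod q, computed without truncated subtraction *)
Definition beta_s (q T x y : nat) : seq nat :=
  [seq (k * y + (q - x %% q)) %% q | k <- iota 0 T].

Definition sumset (q : nat) (A B : seq nat) : seq nat :=
  [seq (a + b) %% q | a <- A, b <- B].

Definition card_inter (A B : seq nat) : nat := size (undup [seq z <- A | z \in B]).

(* Write a = K*, b = L*, t = T-bar, so that q = a b + t^2.  Elements of the
   sumsets are residues of i y + j x, and two of them coincide exactly when the
   difference (d, k) of their coefficients satisfies d y = k x (mod q).  Since
   a y + t x = 0 and hence t y = b x (mod q), these pairs form the lattice
   spanned by (a, -t) and (t, b), of determinant q.  A coincidence between TR
   and BR gives a lattice point with -(a + t) < d < t and 0 <= k <= t, which
   can only be (0, 0) or (-a, t); hence TR meets BR in the residues of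
   m y - x with m < t - kappa or K <= m < K + t.  Likewise a coincidence
   between BL and BR gives (0, 0) or (t, b), and BL meets BR in the residues
   of K y + n x with n < t or L + lambda <= n < L + t.  The same rigidity makes
   these residues distinct, and kappa, lambda < t because among t consecutive
   integers one is 1 mod t. *)

From mathcomp Require Import all_boot all_algebra zify ring.
Import GRing.Theory Num.Theory.

Section Lattice.

Local Open Scope ring_scope.

Lemma dvdz_small_eq0 (q n : int) : (q %| n)%Z -> - q < n < q -> n = 0.
Proof. by case/dvdzP=> c ->; case: (ltrgtP c 0) => [||->]; nia. Qed.

Variables a b t x y : int.
Local Notation q := (a * b + t ^+ 2).

(* d t + k a and d b - k t are q times the coordinates of (d, k) in the basis
   (t, b), (a, -t) of the lattice. *)

Hypotheses (t_gt0 : 0 < t) (t_le_a : t <= a) (t_le_b : t <= b).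
Hypotheses (coprime_ta : coprimez t a) (coprime_tb : coprimez t b).
Hypotheses (coprime_qx : coprimez q x) (dvd_ay_tx : (q %| a * y + t * x)%Z).

Lemma coprime_qa : coprimez q a.
Proof.
by rewrite coprimez_sym /coprimez mulrC gcdzMDl -/(coprimez a _) coprimezXr // coprimez_sym.
Qed.

Lemma dvdz_dt_ka (d k : int) : (q %| d * y - k * x)%Z -> (q %| d * t + k * a)%Z.
Proof.
move=> dvd_dk; rewrite -(Gauss_dvdzr _ coprime_qx).
have -> : x * (d * t + k * a) = d * (a * y + t * x) - a * (d * y - k * x) by ring.
by rewrite rpredB ?dvdz_mull.
Qed.

Lemma dvdz_db_kt (d k : int) : (q %| d * y - k * x)%Z -> (q %| d * b - k * t)%Z.
Proof.
move=> /dvdz_dt_ka dvd_a; rewrite -(Gauss_dvdzr _ coprime_qa).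
have -> : a * (d * b - k * t) = d * q - t * (d * t + k * a) by ring.
by rewrite rpredB ?dvdz_mull ?dvdz_mulr.
Qed.

Lemma dvdz_ty_bx : (q %| t * y - b * x)%Z.
Proof.
rewrite -(Gauss_dvdzr _ coprime_qa).
have -> : a * (t * y - b * x) = t * (a * y + t * x) - x * q by ring.
by rewrite rpredB ?dvdz_mull ?dvdz_mulr.
Qed.

Lemma lattice_box_a (d k : int) : (q %| d * y - k * x)%Z ->
  - (a + t) < d < t -> 0 <= k <= t -> (d = 0 /\ k = 0) \/ (d = - a /\ k = t).
Proof.
move=> /dvdz_dt_ka /dvdz_small_eq0 small_eq0 d_bnd k_bnd.
have {small_eq0} dtka0 : d * t + k * a = 0 by apply: small_eq0; nia.
have /dvdzP [f def_k] : (t %| k)%Z.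
  rewrite -(Gauss_dvdzl _ coprime_ta) (_ : k * a = - (d * t)); last lia.
  by rewrite rpredN dvdz_mull.
have [f0|f1] : f = 0 \/ f = 1.
  by case: (ltrgtP f 0) => [?|?|]; [nia | right; nia | left].
- by left; subst f k; nia.
- by right; subst f k; nia.
Qed.

Lemma lattice_box_b (d k : int) : (q %| d * y - k * x)%Z ->
  0 <= d <= t -> - t < k < b + t -> (d = 0 /\ k = 0) \/ (d = t /\ k = b).
Proof.
move=> /dvdz_db_kt /dvdz_small_eq0 small_eq0 d_bnd k_bnd.
have {small_eq0} dbkt0 : d * b - k * t = 0 by apply: small_eq0; nia.
have /dvdzP [f def_d] : (t %| d)%Z.
  by rewrite -(Gauss_dvdzl _ coprime_tb) (_ : d * b = k * t) ?dvdz_mull //; lia.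
have [f0|f1] : f = 0 \/ f = 1.
  by case: (ltrgtP f 0) => [?|?|]; [nia | right; nia | left].
- by left; subst f d; nia.
- by right; subst f d; nia.
Qed.

End Lattice.

Section Residues.

Local Open Scope ring_scope.

Variable q : nat.

Definition residue (n : int) : nat := `|(n %% q)%Z|%N.

Lemma residue_nat (n : nat) : residue n = (n %% q)%N.
Proof. by rewrite /residue modz_nat absz_nat. Qed.

Hypothesis q_gt0 : (0 < q)%N.

Lemma residueE n : (residue n)%:Z = (n %% q)%Z.
Proof. by rewrite gez0_abs // modz_ge0 //; lia. Qed.

Lemma eq_residue u v : (residue u == residue v) = (u == v %[mod q])%Z.
Proof. by rewrite -eqz_nat !residueE. Qed.

Lemma eq_residue_dvd u v : (residue u == residue v) = (q %| u - v)%Z.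
Proof. by rewrite eq_residue eqz_mod_dvd. Qed.

Lemma residue_modD u v : ((residue u + residue v) %% q)%N = residue (u + v).
Proof. by apply/eqP; rewrite -residue_nat eq_residue PoszD !residueE modzDm. Qed.

Lemma mem_sumset_residue (f g : nat -> int) n m z :
  reflect (exists i j, [/\ (i < n)%N, (j < m)%N & z = residue (f i + g j)])
    (z \in sumset q [seq residue (f i) | i <- iota 0 n]
                    [seq residue (g j) | j <- iota 0 m]).
Proof.
apply: (iffP allpairsP) => [[[u v] /= [/mapP[i i_n ->] /mapP[j j_m ->] ->]] |].
  by rewrite !mem_iota in i_n j_m; exists i, j; rewrite residue_modD.
case=> i [j [i_n j_m ->]]; exists (residue (f i), residue (g j)).
split; [apply/mapP; exists i | apply/mapP; exists j | by rewrite residue_modD].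
all: by rewrite ?mem_iota.
Qed.

Lemma alpha_pE K y : alpha_p q K y = [seq residue (k%:Z * y%:Z) | k <- iota 0 K].
Proof. by apply: eq_map => k; rewrite -residue_nat PoszM. Qed.

Lemma alpha_sE K T x y :
  alpha_s q K T x y = [seq residue (K%:Z * y%:Z + k%:Z * x%:Z) | k <- iota 0 T].
Proof. by apply: eq_map => k; rewrite -residue_nat PoszD !PoszM. Qed.

Lemma beta_pE L x : beta_p q L x = [seq residue (k%:Z * x%:Z) | k <- iota 0 L].
Proof. by apply: eq_map => k; rewrite -residue_nat PoszM. Qed.

Lemma beta_sE T x y :
  beta_s q T x y = [seq residue (k%:Z * y%:Z - x%:Z) | k <- iota 0 T].
Proof.
apply: eq_map => k; apply/eqP; rewrite -residue_nat eq_residue eqz_mod_dvd.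
apply/dvdzP; exists ((x %/ q)%N%:Z + 1).
by have := divn_eq x q; have := ltn_pmod x q_gt0; lia.
Qed.

End Residues.

Lemma card_interE {A B E : seq nat} : uniq E ->
  (forall z, (z \in A) && (z \in B) = (z \in E)) -> card_inter A B = size E.
Proof.
move=> uniq_E memE; apply: perm_size; apply: uniq_perm => [||z].
- exact: undup_uniq.
- exact: uniq_E.
- by rewrite mem_undup mem_filter andbC memE.
Qed.

Lemma least_coprime_shift_lt {a m k : nat} : (0 < m)%N ->
  is_least_coprime_shift a m k -> (k < m)%N.
Proof.
move=> m_gt0 /andP[_ /allP none_coprime]; rewrite ltnNge; apply/negP => m_le_k.
(* a + j = 1 (mod m) *)
set j := ((m.+1 - a %% m) %% m)%N.
have : (j \in iota 0 k) by rewrite mem_iota /= (leq_trans (ltn_pmod _ m_gt0)).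
move/none_coprime/negP; apply.
rewrite -coprime_modl modnDmr -modnDml subnKC; first by rewrite coprime_modl coprimeSn.
exact: leq_trans (ltnW (ltn_pmod a m_gt0)) (leqnSn m).
Qed.

Section Intersections.

Local Open Scope ring_scope.

Variables K L t kappa lambda x y : nat.
Local Notation a := (K + 1 + kappa)%N.
Local Notation b := (L + 1 + lambda)%N.
Local Notation q := (a * b + t ^ 2)%N.

Hypotheses (t_gt0 : (0 < t)%N) (t_lt_L : (t < L)%N) (L_le_K : (L <= K)%N).
Hypotheses (coprime_ta : coprime t a) (coprime_tb : coprime t b).
Hypotheses (coprime_qx : coprime q x) (dvd_ay_tx : (q %| a * y + t * x)%N).

Local Notation TR := (sumset q (alpha_p q K y) (beta_s q t.+1 x y)).
Local Notation BL := (sumset q (alpha_s q K t.+1 x y) (beta_p q L x)).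
Local Notation BR := (sumset q (alpha_s q K t.+1 x y) (beta_s q t.+1 x y)).

Let q_gt0 : (0 < q)%N.
Proof. by rewrite addn_gt0 expn_gt0 t_gt0 orbT. Qed.

Let qZ : q%:Z = a%:Z * b%:Z + t%:Z ^+ 2.
Proof. by rewrite -mulnn PoszD !PoszM expr2. Qed.

Let tZ_gt0 : 0 < t%:Z. Proof. by rewrite ltz_nat. Qed.
Let t_le_aZ : t%:Z <= a%:Z. Proof. by rewrite lez_nat; lia. Qed.
Let t_le_bZ : t%:Z <= b%:Z. Proof. by rewrite lez_nat; lia. Qed.
Let coprimez_qx : coprimez (a%:Z * b%:Z + t%:Z ^+ 2) x. Proof. by rewrite -qZ. Qed.
Let dvdz_ay_tx : (a%:Z * b%:Z + t%:Z ^+ 2 %| a%:Z * y%:Z + t%:Z * x%:Z)%Z.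
Proof. by rewrite -qZ -!PoszM -PoszD dvdzE. Qed.

Let box_a := lattice_box_a _ _ _ _ _
  tZ_gt0 t_le_aZ t_le_bZ coprime_ta coprime_tb coprimez_qx dvdz_ay_tx.
Let box_b := lattice_box_b _ _ _ _ _
  tZ_gt0 t_le_aZ t_le_bZ coprime_ta coprime_tb coprimez_qx dvdz_ay_tx.
Let ty_bx := @dvdz_ty_bx a b t x y coprime_ta dvdz_ay_tx.

Lemma mem_TR_BR z : (z \in TR) && (z \in BR) =
  (z \in [seq residue q (m%:Z * y%:Z - x%:Z) | m <- iota 0 (t - kappa) ++ iota K t]).
Proof.
rewrite alpha_pE alpha_sE !beta_sE //; apply/andP/mapP => [[]|[m m_S ->]].
- case/(mem_sumset_residue _ q_gt0) => i1 [j1 [i1_K j1_t ->]].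
  case/(mem_sumset_residue _ q_gt0) => i2 [j2 [i2_t j2_t /eqP]].
  rewrite eq_residue_dvd //.
  rewrite (_ : _ - _ = (i1%:Z + j1%:Z - K%:Z - j2%:Z) * y%:Z - i2%:Z * x%:Z); last ring.
  case/box_a => [||[d0 _]|[da _]]; try lia.
  + exists (i1 + j1)%N; first by rewrite mem_cat !mem_iota; lia.
    by rewrite PoszD; congr residue; ring.
  + exists (i1 + j1)%N; first by rewrite mem_cat !mem_iota; lia.
    by rewrite PoszD; congr residue; ring.
- rewrite mem_cat !mem_iota /= in m_S.
  split; apply/(mem_sumset_residue _ q_gt0); case: (ltnP m K) => [m_lt_K|K_le_m].
  + by exists m, 0%N; split; [lia | lia | congr residue; ring].
  + have [j def_m] : exists j, m = (K.-1 + j)%N by exists (m - K.-1)%N; lia.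
    subst m.
    by exists K.-1, j; split; [lia | lia | rewrite PoszD; congr residue; ring].
  + exists t, (m + 1 + kappa)%N; split; [lia | lia |].
    apply/eqP; rewrite eq_residue_dvd //.
    rewrite (_ : _ - _ = - (a%:Z * y%:Z + t%:Z * x%:Z)) ?rpredN ?dvdz_ay_tx //.
    by rewrite !PoszD; ring.
  + have [j def_m] : exists j, m = (K + j)%N by exists (m - K)%N; lia.
    subst m.
    by exists 0%N, j; split; [lia | lia | rewrite PoszD; congr residue; ring].
Qed.

Lemma uniq_TR_BR :
  uniq [seq residue q (m%:Z * y%:Z - x%:Z) | m <- iota 0 (t - kappa) ++ iota K t].
Proof.
rewrite map_inj_in_uniq.
  by rewrite cat_uniq !iota_uniq andbT /=; apply/hasPn => m; rewrite !mem_iota; lia.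
move=> m m'; rewrite !mem_cat !mem_iota /=.
wlog le_mm' : m m' / (m <= m')%N.
  by move=> wlog_le m_S m'_S eq_m; case: (leqP m m') => [|/ltnW] le;
    [|apply/esym; move/esym: eq_m]; apply: wlog_le.
move=> m_S m'_S /eqP; rewrite eq_residue_dvd //.
rewrite (_ : _ - _ = (m%:Z - m'%:Z) * y%:Z - 0 * x%:Z); last ring.
by case/box_a; lia.
Qed.

Lemma mem_BL_BR z : (z \in BL) && (z \in BR) =
  (z \in [seq residue q (K%:Z * y%:Z + n%:Z * x%:Z)
           | n <- iota 0 t ++ iota (L + lambda) (t - lambda)]).
Proof.
rewrite alpha_sE beta_pE beta_sE //; apply/andP/mapP => [[]|[n n_S ->]].
- case/(mem_sumset_residue _ q_gt0) => i1 [j1 [i1_t j1_L ->]].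
  case/(mem_sumset_residue _ q_gt0) => i2 [j2 [i2_t j2_t /eqP]].
  rewrite eq_residue_dvd //.
  rewrite (_ : _ - _ = - (j2%:Z * y%:Z - (i1%:Z + j1%:Z + 1 - i2%:Z) * x%:Z)); last ring.
  rewrite rpredN; case/box_b => [||[_ k0]|[_ kb]]; try lia.
  + exists (i1 + j1)%N; first by rewrite mem_cat !mem_iota; lia.
    by rewrite PoszD; congr residue; ring.
  + exists (i1 + j1)%N; first by rewrite mem_cat !mem_iota; lia.
    by rewrite PoszD; congr residue; ring.
- rewrite mem_cat !mem_iota /= in n_S.
  split; apply/(mem_sumset_residue _ q_gt0); case: (ltnP n t) => [n_lt_t|t_le_n].
  + by exists n, 0%N; split; [lia | lia | congr residue; ring].
  + have [j def_n] : exists j, n = (j + lambda + 1 + L.-1)%N.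
      by exists (n - L - lambda)%N; lia.
    subst n; exists (j + lambda + 1)%N, L.-1; split; [lia | lia |].
    by rewrite PoszD; congr residue; ring.
  + by exists n.+1, 0%N; split; [lia | lia | congr residue; rewrite -addn1 PoszD; ring].
  + have [j def_n] : exists j, n = (L + lambda + j)%N by exists (n - L - lambda)%N; lia.
    subst n; exists j, t; split; [lia | lia |].
    apply/eqP; rewrite eq_residue_dvd //.
    rewrite (_ : _ - _ = - (t%:Z * y%:Z - b%:Z * x%:Z)) ?rpredN ?ty_bx //.
    by rewrite !PoszD; ring.
Qed.

Lemma uniq_BL_BR : uniq [seq residue q (K%:Z * y%:Z + n%:Z * x%:Z)
                          | n <- iota 0 t ++ iota (L + lambda) (t - lambda)].
Proof.
rewrite map_inj_in_uniq.
  by rewrite cat_uniq !iota_uniq andbT /=; apply/hasPn => n; rewrite !mem_iota; lia.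
move=> n n'; rewrite !mem_cat !mem_iota /= => n_S n'_S /eqP.
rewrite eq_residue_dvd // (_ : _ - _ = (n%:Z - n'%:Z) * x%:Z); last ring.
rewrite Gauss_dvdzl // => /dvdz_small_eq0 small_eq0.
suff : n%:Z - n'%:Z = 0 by lia.
by apply: small_eq0; nia.
Qed.

Lemma card_TR_BR : (kappa < t)%N -> card_inter TR BR = (2 * t - kappa)%N.
Proof.
move=> kappa_lt_t; rewrite (card_interE uniq_TR_BR mem_TR_BR).
by rewrite size_map size_cat !size_iota; lia.
Qed.

Lemma card_BL_BR : (lambda < t)%N -> card_inter BL BR = (2 * t - lambda)%N.
Proof.
move=> lambda_lt_t; rewrite (card_interE uniq_BL_BR mem_BL_BR).
by rewrite size_map size_cat !size_iota; lia.
Qed.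

End Intersections.

Theorem lemma7 (K L T x y kappa lambda : nat) :
  2 <= T -> T <= L -> L <= K ->
  is_least_coprime_shift (K + 1) (T - 1) kappa ->
  is_least_coprime_shift (L + 1) (T - 1) lambda ->
  let q := qCAT K L T kappa lambda in
  0 < x -> coprime x q ->
  y < q -> (x * Tbar T + y * Kstar K kappa) %% q = 0 ->
  let TR := sumset q (alpha_p q K y) (beta_s q T x y) in
  let BL := sumset q (alpha_s q K T x y) (beta_p q L x) in
  let BR := sumset q (alpha_s q K T x y) (beta_s q T x y) in
  card_inter TR BR = 2 * Tbar T - kappa /\
  card_inter BL BR = 2 * Tbar T - lambda.
Proof.
case: T => [//|t]; rewrite /qCAT /Tbar /Kstar /Lstar subSS subn0 ltnS.
move=> t_gt0 t_lt_L L_le_K shift_kappa shift_lambda _ coprime_xq _ /eqP dvd_tx_ay.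
have kappa_lt_t := least_coprime_shift_lt t_gt0 shift_kappa.
have lambda_lt_t := least_coprime_shift_lt t_gt0 shift_lambda.
case/andP: shift_kappa shift_lambda => coprime_at _ /andP[coprime_bt _].
have dvd_ay_tx : (K + 1 + kappa) * (L + 1 + lambda) + t ^ 2 %| (K + 1 + kappa) * y + t * x.
  by rewrite /dvdn addnC mulnC (mulnC _ y) dvd_tx_ay.
by split; [apply: card_TR_BR | apply: card_BL_BR]; rewrite // coprime_sym.
Qed.
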